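(* Let $G$ be a compactly generated, totally disconnected, locally compact group. If $G$ has a compact, open, normal subgroup, then there exists a Cayley–Abels graph $\Gamma$ for $G$ of minimal degree $\mathrm{md}(G)$ on which $G$ acts discretely, i.e. the stabilizers in $G^\Gamma$ of vertices are finite, where $G^\Gamma$ is the permutation group on the vertex set induced by $G$.
   Context: A Cayley–Abels graph for a totally disconnected, locally compact group $G$ is a connected, locally finite simple graph with an action of $G$ by graph automorphisms (not necessarily faithful) that is vertex-transitive and has compact open vertex stabilizers; such a graph exists iff $G$ is compactly generated. $\mathrm{md}(G)$ is the minimal degree of a Cayley–Abels graph for $G$. *)

From HB Require Import structures.
From mathcomp Require Import all_boot all_order all_algebra.
From mathcomp Require Import all_classical all_reals all_analysis.
From Stdlib Require Import Relations.Relation_Operators.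
Set Implicit Arguments. Unset Strict Implicit. Unset Printing Implicit Defensive.
Local Open Scope classical_set_scope.
Local Open Scope card_scope.

Record topGroup := TopGroup {
  tg_carrier :> topologicalType;
  tg_mul : tg_carrier -> tg_carrier -> tg_carrier;
  tg_inv : tg_carrier -> tg_carrier;
  tg_one : tg_carrier;
  tg_mulA : forall x y z, tg_mul x (tg_mul y z) = tg_mul (tg_mul x y) z;
  tg_mul1g : forall x, tg_mul tg_one x = x;
  tg_mulVg : forall x, tg_mul (tg_inv x) x = tg_one;
  tg_mul_cont : continuous (fun p : tg_carrier * tg_carrier => tg_mul p.1 p.2);
  tg_inv_cont : continuous tg_inv
}.

Section GroupNotions.
Variable G : topGroup.
Local Notation mul := (tg_mul (t:=G)).
Local Notation inv := (tg_inv (t:=G)).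
Local Notation one := (tg_one G).

Definition is_subgroup (H : set G) : Prop :=
  H one /\ (forall x y, H x -> H y -> H (mul x y)) /\ (forall x, H x -> H (inv x)).

Definition is_normal_subgroup (H : set G) : Prop :=
  is_subgroup H /\ forall g h, H h -> H (mul (mul g h) (inv g)).

Definition generates (K : set G) : Prop :=
  forall H : set G, is_subgroup H -> K `<=` H -> H = [set: G].

Definition compactly_generated : Prop :=
  exists K : set G, compact K /\ generates K.

Definition tdlc : Prop :=
  totally_disconnected [set: G] /\ locally_compact [set: G].

End GroupNotions.

Record CayleyAbels (G : topGroup) := {
  ca_V : Type;
  ca_adj : ca_V -> ca_V -> Prop;
  ca_act : G -> ca_V -> ca_V;
  ca_inhabited : inhabited ca_V;
  ca_sym : forall v w, ca_adj v w -> ca_adj w v;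
  ca_irrefl : forall v, ~ ca_adj v v;
  ca_connected : forall v w, clos_refl_trans ca_V ca_adj v w;
  ca_locfin : forall v, finite_set [set w | ca_adj v w];
  ca_act1 : forall v, ca_act (tg_one G) v = v;
  ca_actM : forall g h v, ca_act (tg_mul g h) v = ca_act g (ca_act h v);
  ca_act_adj : forall g v w, ca_adj v w <-> ca_adj (ca_act g v) (ca_act g w);
  ca_trans : forall v w, exists g, ca_act g v = w;
  ca_stab_open : forall v, open [set g : G | ca_act g v = v];
  ca_stab_compact : forall v, compact [set g : G | ca_act g v = v]
}.

Definition ca_degree (G : topGroup) (Gam : CayleyAbels G) (d : nat) : Prop :=
  forall v : ca_V Gam, [set w | ca_adj v w] #= `I_d.

Definition is_md (G : topGroup) (d : nat) : Prop :=
  (exists Gam : CayleyAbels G, ca_degree Gam d) /\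
  (forall (Gam : CayleyAbels G) (d' : nat), ca_degree Gam d' -> (d <= d')%N).

(* G acts discretely on Gam: vertex stabilizers in the induced permutation
   group G^Gam (the image of G in Sym(V)) are finite. *)
Definition acts_discretely (G : topGroup) (Gam : CayleyAbels G) : Prop :=
  forall v : ca_V Gam,
    finite_set [set f : ca_V Gam -> ca_V Gam |
                 exists g : G, ca_act (c:=Gam) g v = v /\ f = ca_act (c:=Gam) g].

(* Let K be a compact open normal subgroup of G.  The proof rests on one
   construction: for any action of G on a graph (V, adj), the quotient graph
   V/K has the K-orbits as vertices, two distinct orbits being adjacent when
   they contain adjacent representatives.  Since K is normal, G acts on V/K
   and K acts trivially there.  We show:
   - the stabiliser of the orbit of v is K * G_v; it is open (resp. compact)
     when G_v is open (resp. K and G_v are compact);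
   - the neighbours of the orbit of v are images of neighbours of v, so V/K
     has degree at most the degree of V;
   - when K is open and G_v compact, G_v is covered by finitely many cosets
     uK, and K acts trivially, so G_v induces finitely many permutations of
     V/K: the action on V/K is discrete.
   A first Cayley--Abels graph is the quotient by K of a Cayley graph of G
   with respect to a finite set F whose K-cosets cover a compact generating
   set.  Hence md(G) is attained by some Cayley--Abels graph Gam, and Gam/K
   is a Cayley--Abels graph of degree <= md(G), thus = md(G), on which G acts
   discretely. *)
From HB Require Import structures.
From mathcomp Require Import all_boot all_order all_algebra.
From mathcomp Require Import all_classical all_reals all_analysis.
From mathcomp Require Import finmap.
From Stdlib Require Import Relations.Relation_Operators.
Set Implicit Arguments. Unset Strict Implicit. Unset Printing Implicit Defensive.
Local Open Scope classical_set_scope.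
Local Open Scope card_scope.

Section GroupFacts.
Variable G : topGroup.
Local Notation mul := (tg_mul (t:=G)).
Local Notation inv := (tg_inv (t:=G)).
Local Notation one := (tg_one G).

Lemma tg_mulgV (x : G) : mul x (inv x) = one.
Proof.
rewrite -[LHS]tg_mul1g -{1}(tg_mulVg (inv x)) -tg_mulA (tg_mulA (inv x) x).
by rewrite tg_mulVg tg_mul1g tg_mulVg.
Qed.

Lemma tg_mulg1 (x : G) : mul x one = x.
Proof. by rewrite -(tg_mulVg x) tg_mulA tg_mulgV tg_mul1g. Qed.

Lemma tg_invgK (x : G) : inv (inv x) = x.
Proof. by rewrite -[LHS]tg_mulg1 -(tg_mulVg x) tg_mulA tg_mulVg tg_mul1g. Qed.

Lemma tg_mulKVg (x y : G) : mul x (mul (inv x) y) = y.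
Proof. by rewrite tg_mulA tg_mulgV tg_mul1g. Qed.

Lemma tg_mulIg (g k x : G) : mul g x = mul k x -> g = k.
Proof.
move=> e; have : mul (mul g x) (inv x) = mul (mul k x) (inv x) by rewrite e.
by rewrite -!tg_mulA tg_mulgV !tg_mulg1.
Qed.

(* Left translations are continuous, so left translates gU of open sets,
   written as preimages under x |-> g^-1 x, are open. *)
Lemma lmul_continuous (g : G) : continuous (fun x : G => mul g x).
Proof.
move=> x; apply: (@continuous2_cvg _ _ _ _ _ _ (fun _ => g) id (fun a b => mul a b)).
- exact: (@tg_mul_cont _ (g, x)).
- exact: cvg_cst.
- exact: cvg_id.
Qed.

Lemma open_ltranslate (g : G) (U : set G) :
  open U -> open [set x | U (mul (inv g) x)].
Proof. by move=> oU; have /continuousP := @lmul_continuous (inv g); apply. Qed.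

End GroupFacts.

(* The cover characterisation of compactness is stated for pointed spaces;
   a topological group is pointed by its unit. *)
Definition pointed_group (G : topGroup) : Type := tg_carrier G.
HB.instance Definition _ (G : topGroup) := Topological.on (pointed_group G).
HB.instance Definition _ (G : topGroup) :=
  isPointed.Build (pointed_group G) (tg_one G).

Lemma compact_cover_group (G : topGroup) (A : set G) :
  compact A -> cover_compact A.
Proof.
change (@compact (pointed_group G) A -> @cover_compact (pointed_group G) A).
by rewrite compact_cover.
Qed.

Lemma compact_ltranslate_cover (G : topGroup) (U A : set G) :
  open U -> U (tg_one G) -> compact A ->
  exists F : {fset G}, A `<=` \bigcup_(u in [set` F]) [set x | U (tg_mul (tg_inv u) x)].
Proof.
move=> oU U1 /compact_cover_group cA.
have Acov : A `<=` \bigcup_(u in A) [set x | U (tg_mul (tg_inv u) x)].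
  by move=> u Au; exists u => //=; rewrite tg_mulVg.
have [F _ FA] := cA G A _ (fun u _ => open_ltranslate u oU) Acov.
by exists F.
Qed.

Lemma clos_rt_sym (T : Type) (R : T -> T -> Prop) :
  (forall x y, R x y -> R y x) ->
  forall x y, clos_refl_trans T R x y -> clos_refl_trans T R y x.
Proof.
move=> Rsym x y; elim=> [a b /Rsym ab|a|a b c _ IH1 _ IH2].
- exact: rt_step.
- exact: rt_refl.
- exact: rt_trans IH2 IH1.
Qed.

Lemma card_II_le_image T U (N : set T) (M : set U) (f : T -> U) n m :
  N #= `I_n -> M #= `I_m -> M `<=` f @` N -> (m <= n)%N.
Proof.
move=> /card_eqPle[Nn _] /card_eqPle[_ mM] MfN; rewrite -card_le_II.
apply: card_le_trans mM _; apply: card_le_trans (subset_card_le MfN) _.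
exact: card_le_trans (card_image_le f N) Nn.
Qed.

Section OrbitQuotient.
Variable G : topGroup.
Local Notation mul := (tg_mul (t:=G)).
Local Notation inv := (tg_inv (t:=G)).
Local Notation one := (tg_one G).

Variables (V : Type) (adj : V -> V -> Prop) (act : G -> V -> V).
Hypothesis act1 : forall v, act one v = v.
Hypothesis actM : forall g h v, act (mul g h) v = act g (act h v).
Hypothesis adj_sym : forall v w, adj v w -> adj w v.
Hypothesis act_adj : forall g v w, adj v w -> adj (act g v) (act g w).
Variable K : set G.
Hypothesis K_normal : is_normal_subgroup K.

Lemma K1 : K one. Proof. by case: K_normal => -[]. Qed.
Lemma KM x y : K x -> K y -> K (mul x y).
Proof. by case: K_normal => -[_ []] + _ _; apply. Qed.
Lemma KV x : K x -> K (inv x).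
Proof. by case: K_normal => -[_ []] _ + _; apply. Qed.
Lemma Kconj g h : K h -> K (mul (mul g h) (inv g)).
Proof. by case: K_normal => _; apply. Qed.

Lemma actVK g v : act (inv g) (act g v) = v.
Proof. by rewrite -actM tg_mulVg act1. Qed.
Lemma actKV g v : act g (act (inv g) v) = v.
Proof. by rewrite -actM tg_mulgV act1. Qed.

Definition orbit (v : V) : set V := [set w | exists k, K k /\ w = act k v].
Definition orbit_space := {P : set V | exists v, P = orbit v}.
Definition qproj (v : V) : orbit_space := exist _ (orbit v) (ex_intro _ v erefl).

Lemma orbit_space_eq (a b : orbit_space) : proj1_sig a = proj1_sig b -> a = b.
Proof.
case: a b => [P pP] [Q pQ] /= PQ; subst Q; congr exist; exact: Prop_irrelevance.
Qed.

Lemma qproj_surj (a : orbit_space) : exists v, a = qproj v.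
Proof. by case: a => P [v pv]; exists v; apply: orbit_space_eq. Qed.

Lemma orbit_eq v w : (exists k, K k /\ w = act k v) -> orbit v = orbit w.
Proof.
case=> k [Kk ->]; apply/seteqP; split=> u [k' [Kk' ->]].
- exists (mul k' (inv k)); split; first by apply: KM => //; exact: KV.
  by rewrite actM actVK.
- by exists (mul k' k); split; [exact: KM | rewrite actM].
Qed.

Lemma qproj_eq v w : qproj v = qproj w <-> exists k, K k /\ w = act k v.
Proof.
split=> [e|h]; last by apply: orbit_space_eq; exact: orbit_eq.
have : proj1_sig (qproj v) w.
  by rewrite e /=; exists one; rewrite act1; split=> //; exact: K1.
by case=> k [Kk ->]; exists k.
Qed.

Lemma qproj_K k v : K k -> qproj (act k v) = qproj v.
Proof. by move=> Kk; symmetry; apply/qproj_eq; exists k. Qed.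

(* Since K is normal, g maps the orbit of v onto the orbit of g v. *)
Lemma translate_orbit g v :
  [set w | orbit v (act (inv g) w)] = orbit (act g v).
Proof.
apply/seteqP; split=> w.
- case=> k [Kk e]; exists (mul (mul g k) (inv g)); split; first exact: Kconj.
  by rewrite actM actVK actM -e actKV.
- case=> k [Kk ->]; exists (mul (mul (inv g) k) (inv (inv g))).
  by split; [exact: Kconj | rewrite tg_invgK !actM].
Qed.

Definition qact (g : G) (a : orbit_space) : orbit_space.
Proof.
exists [set w | proj1_sig a (act (inv g) w)].
by case: a => P [v e] /=; exists (act g v); rewrite e; exact: translate_orbit.
Defined.

Lemma qact_proj g v : qact g (qproj v) = qproj (act g v).
Proof. by apply: orbit_space_eq => /=; exact: translate_orbit. Qed.

Lemma qact1 a : qact one a = a.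
Proof. by case: (qproj_surj a) => v ->; rewrite qact_proj act1. Qed.

Lemma qactM g h a : qact (mul g h) a = qact g (qact h a).
Proof. by case: (qproj_surj a) => v ->; rewrite !qact_proj actM. Qed.

Lemma qactVK g a : qact (inv g) (qact g a) = a.
Proof. by rewrite -qactM tg_mulVg qact1. Qed.

Lemma qact_K k : K k -> qact k = id.
Proof.
move=> Kk; apply: funext => a; case: (qproj_surj a) => v ->.
by rewrite qact_proj; exact: qproj_K.
Qed.

Definition qadj (a b : orbit_space) : Prop :=
  a <> b /\ exists v w, a = qproj v /\ b = qproj w /\ adj v w.

Lemma qadj_sym a b : qadj a b -> qadj b a.
Proof.
case=> ab [v [w [ea [eb vw]]]]; split; first by move=> e; apply: ab.
by exists w, v; rewrite ea eb; do 2 split => //; exact: adj_sym.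
Qed.

Lemma qadj_irrefl a : ~ qadj a a.
Proof. by case. Qed.

Lemma qact_adj_imp g a b : qadj a b -> qadj (qact g a) (qact g b).
Proof.
case=> ab [v [w [ea [eb vw]]]]; split.
- by move=> e; apply: ab; rewrite -(qactVK g a) e qactVK.
- exists (act g v), (act g w); rewrite ea eb !qact_proj.
  by do 2 split => //; exact: act_adj.
Qed.

Lemma qact_adj g a b : qadj a b <-> qadj (qact g a) (qact g b).
Proof.
split; first exact: qact_adj_imp.
by move=> /(qact_adj_imp (inv g)); rewrite !qactVK.
Qed.

Lemma qconnected_lift v w :
  clos_refl_trans V adj v w -> clos_refl_trans orbit_space qadj (qproj v) (qproj w).
Proof.
elim=> [a b ab|a|a b c _ IH1 _ IH2].
- have [->|ne] := pselect (qproj a = qproj b); first exact: rt_refl.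
  by apply: rt_step; split=> //; exists a, b.
- exact: rt_refl.
- exact: rt_trans IH1 IH2.
Qed.

Lemma qneighbours_sub v : [set b | qadj (qproj v) b] `<=` qproj @` [set w | adj v w].
Proof.
move=> b [_ [v' [w' [e [-> vw]]]]].
have [k [Kk ev']] : exists k, K k /\ v' = act k v by apply/qproj_eq.
exists (act (inv k) w'); last by apply: qproj_K; exact: KV.
by have := act_adj (inv k) vw; rewrite ev' actVK.
Qed.

Lemma qstab v : [set g | qact g (qproj v) = qproj v] =
  [set g | exists k, K k /\ act g v = act k v].
Proof.
apply/seteqP; split=> g /=.
- rewrite qact_proj => /qproj_eq [k [Kk e]]; exists (inv k); split; first exact: KV.
  by rewrite [in RHS]e actVK.
- by case=> k [Kk e]; rewrite qact_proj e; exact: qproj_K.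
Qed.

(* K * G_v is a union of translates kG_v, hence open when G_v is. *)
Lemma open_qstab v : open [set g | act g v = v] ->
  open [set g | qact g (qproj v) = qproj v].
Proof.
move=> oGv; rewrite qstab.
have -> : [set g | exists k, K k /\ act g v = act k v] =
    \bigcup_(k in K) [set g | [set h | act h v = v] (mul (inv k) g)].
  apply/seteqP; split=> g.
  - by case=> k [Kk e]; exists k => //=; rewrite actM e actVK.
  - case=> k Kk /= e; exists k; split => //.
    by rewrite -[in LHS](tg_mulKVg k g) actM e.
by apply: bigcup_open => k _; exact: open_ltranslate.
Qed.

(* K * G_v is the image of K x G_v under multiplication, hence compact. *)
Lemma compact_qstab v : compact K -> compact [set g | act g v = v] ->
  compact [set g | qact g (qproj v) = qproj v].
Proof.
move=> cK cGv; rewrite qstab.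
have -> : [set g | exists k, K k /\ act g v = act k v] =
    (fun p : G * G => mul p.1 p.2) @` (K `*` [set g | act g v = v]).
  apply/seteqP; split=> g.
  - case=> k [Kk e]; exists (k, mul (inv k) g); last by rewrite /= tg_mulKVg.
    by split => //=; rewrite actM e actVK.
  - by case=> -[k u] [/= Kk Gu] <-; exists k; split => //; rewrite actM Gu.
apply: continuous_compact; last exact: compact_setX.
by apply: continuous_subspaceT; exact: tg_mul_cont.
Qed.

(* If K is open and G_v compact, then G_v is covered by finitely many cosets
   uK; as K acts trivially on V/K, the stabiliser of the orbit of v induces
   only the finitely many permutations qact u. *)
Lemma qstab_finite_image v : open K -> compact [set g | act g v = v] ->
  finite_set [set f : orbit_space -> orbit_space |
                exists g, qact g (qproj v) = qproj v /\ f = qact g].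
Proof.
move=> oK /(compact_ltranslate_cover oK K1) [F Fcov].
apply: sub_finite_set (finite_image (fun u => qact u) (finite_fset F)).
move=> f [g [stab ->]].
have [k [Kk e]] : [set g | exists k, K k /\ act g v = act k v] g by rewrite -qstab.
have /Fcov [u Fu /= Ku] : act (mul (inv k) g) v = v by rewrite actM e actVK.
exists u => //; apply: funext => a.
rewrite -[in RHS](tg_mulKVg k g) -[in RHS](tg_mulKVg u (mul (inv k) g)).
by rewrite qactM (qact_K Kk) /= qactM (qact_K Ku).
Qed.

Section QuotientGraph.
Hypothesis V_inhabited : inhabited V.
Hypothesis act_transitive : forall v w, exists g, act g v = w.
Hypothesis adj_locfin : forall v, finite_set [set w | adj v w].
Hypothesis qconnected :
  forall v w, clos_refl_trans orbit_space qadj (qproj v) (qproj w).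
Hypothesis qstab_open : forall v, open [set g | qact g (qproj v) = qproj v].
Hypothesis qstab_compact : forall v, compact [set g | qact g (qproj v) = qproj v].

Lemma orbit_space_inhabited : inhabited orbit_space.
Proof. by case: V_inhabited => v; exact: inhabits (qproj v). Qed.

Lemma orbit_space_connected a b : clos_refl_trans orbit_space qadj a b.
Proof. by case: (qproj_surj a) => v ->; case: (qproj_surj b) => w ->. Qed.

Lemma qadj_locfin a : finite_set [set b | qadj a b].
Proof.
case: (qproj_surj a) => v ->.
apply: sub_finite_set (@qneighbours_sub v) _.
exact: finite_image (adj_locfin v).
Qed.

Lemma qact_transitive a b : exists g, qact g a = b.
Proof.
case: (qproj_surj a) => v ->; case: (qproj_surj b) => w ->.
by have [g <-] := act_transitive v w; exists g; rewrite qact_proj.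
Qed.

Lemma qstab_open_all a : open [set g | qact g a = a].
Proof. by case: (qproj_surj a) => v ->. Qed.

Lemma qstab_compact_all a : compact [set g | qact g a = a].
Proof. by case: (qproj_surj a) => v ->. Qed.

Definition quotient_graph : CayleyAbels G :=
  @Build_CayleyAbels G orbit_space qadj qact orbit_space_inhabited qadj_sym
    qadj_irrefl orbit_space_connected qadj_locfin qact1 qactM qact_adj
    qact_transitive qstab_open_all qstab_compact_all.

Lemma quotient_graph_discrete :
  open K -> (forall v, compact [set g | act g v = v]) ->
  acts_discretely quotient_graph.
Proof.
move=> oK cstab a; case: (qproj_surj a) => v ->.
exact: qstab_finite_image.
Qed.

Lemma quotient_graph_degree_le d d' :
  (forall v, [set w | adj v w] #= `I_d) -> ca_degree quotient_graph d' ->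
  (d' <= d)%N.
Proof.
move=> degV degQ; case: V_inhabited => v.
exact: card_II_le_image (degV v) (degQ (qproj v)) (@qneighbours_sub v).
Qed.

End QuotientGraph.
End OrbitQuotient.

Section CayleyAbelsRegular.
Variable G : topGroup.
Variable Gam : CayleyAbels G.

(* A Cayley--Abels graph is regular: translating a vertex v0 to v maps the
   finite neighbourhood of v0 bijectively onto that of v. *)
Lemma ca_regular : exists n, ca_degree Gam n.
Proof.
have actVK g (v : ca_V Gam) : ca_act (tg_inv g) (ca_act g v) = v.
  by rewrite -ca_actM tg_mulVg ca_act1.
have actKV g (v : ca_V Gam) : ca_act g (ca_act (tg_inv g) v) = v.
  by rewrite -ca_actM tg_mulgV ca_act1.
case: (ca_inhabited Gam) => v0; have [n hn] := ca_locfin v0; exists n => v.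
have [g <-] := ca_trans v0 v.
have -> : [set w | ca_adj (ca_act g v0) w] = ca_act g @` [set w | ca_adj v0 w].
  apply/seteqP; split=> w /=.
  - move=> h; exists (ca_act (tg_inv g) w); last exact: actKV.
    by rewrite /= (ca_act_adj g) actKV.
  - by case=> u h <-; rewrite -ca_act_adj.
apply: card_eq_trans _ hn; apply: inj_card_eq => x y _ _ e.
by rewrite -(actVK g x) e actVK.
Qed.

End CayleyAbelsRegular.

Section QuotientOfCayleyAbels.
Variable G : topGroup.
Variable Gam : CayleyAbels G.
Variable K : set G.
Hypothesis K_normal : is_normal_subgroup K.
Hypothesis K_compact : compact K.

Lemma ca_act_adj_imp g (v w : ca_V Gam) : ca_adj v w -> ca_adj (ca_act g v) (ca_act g w).
Proof. exact: (ca_act_adj g v w).1. Qed.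

Definition ca_quotient : CayleyAbels G :=
  @quotient_graph G (ca_V Gam) (@ca_adj G Gam) (@ca_act G Gam)
    (@ca_act1 G Gam) (@ca_actM G Gam) (@ca_sym G Gam) ca_act_adj_imp K K_normal
    (ca_inhabited Gam) (@ca_trans G Gam) (@ca_locfin G Gam)
    (fun v w => qconnected_lift _ K (ca_connected v w))
    (fun v => open_qstab (@ca_act1 G Gam) (@ca_actM G Gam) K_normal (ca_stab_open v))
    (fun v => @compact_qstab G _ _ _ _ K K_normal v K_compact (@ca_stab_compact G Gam v)).

Lemma ca_quotient_discrete : open K -> acts_discretely ca_quotient.
Proof. by move=> oK; apply: quotient_graph_discrete => //; exact: ca_stab_compact. Qed.

Lemma ca_quotient_degree_le d d' :
  ca_degree Gam d -> ca_degree ca_quotient d' -> (d' <= d)%N.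
Proof. exact: quotient_graph_degree_le. Qed.

End QuotientOfCayleyAbels.

Section CosetGraph.
Variable G : topGroup.
Local Notation mul := (tg_mul (t:=G)).
Local Notation inv := (tg_inv (t:=G)).
Local Notation one := (tg_one G).
Variable K : set G.
Hypothesis K_normal : is_normal_subgroup K.
Hypothesis K_compact : compact K.
Hypothesis K_open : open K.
Variable K0 : set G.
Hypothesis K0_generates : generates K0.
Variable F : {fset G}.
Hypothesis F_covers : K0 `<=` \bigcup_(u in [set` F]) [set x | K (mul (inv u) x)].

Definition cayley_adj (x y : G) : Prop :=
  exists s, ([set` F] s \/ [set` F] (inv s)) /\ y = mul x s.

Lemma lmul_actM (g h x : G) : mul (mul g h) x = mul g (mul h x).
Proof. by rewrite tg_mulA. Qed.

Lemma cayley_adj_sym x y : cayley_adj x y -> cayley_adj y x.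
Proof.
case=> s [Fs ->]; exists (inv s); split; last by rewrite -tg_mulA tg_mulgV tg_mulg1.
by rewrite tg_invgK; case: Fs; [right | left].
Qed.

Lemma cayley_adj_lmul g x y : cayley_adj x y -> cayley_adj (mul g x) (mul g y).
Proof. by case=> s [Fs ->]; exists s; split => //; rewrite tg_mulA. Qed.

Local Notation qproj := (qproj mul K).
Local Notation qadj := (qadj cayley_adj (act:=mul) (K:=K)).
Local Notation qact := (qact (tg_mul1g (t:=G)) lmul_actM K_normal).

Lemma qproj_rmul x k : K k -> qproj (mul x k) = qproj x.
Proof.
move=> Kk; have -> : mul x k = mul (mul (mul x k) (inv x)) x.
  by rewrite -tg_mulA tg_mulVg tg_mulg1.
by apply: (qproj_K (@tg_mul1g G) lmul_actM K_normal); exact: Kconj.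
Qed.

(* The elements x such that every coset a K is joined to a x K form a subgroup
   containing K0 (each k0 in K0 lies in some u K with u in F), hence all of G. *)
Lemma coset_graph_connected x y : clos_refl_trans _ qadj (qproj x) (qproj y).
Proof.
pose H := [set z : G | forall a, clos_refl_trans _ qadj (qproj a) (qproj (mul a z))].
have H_subgroup : is_subgroup H.
  split; [|split].
  - by move=> a; rewrite tg_mulg1; exact: rt_refl.
  - move=> z z' Hz Hz' a; apply: rt_trans (Hz a) _.
    by have := Hz' (mul a z); rewrite -tg_mulA.
  - move=> z Hz a; have := Hz (mul a (inv z)); rewrite -tg_mulA tg_mulVg tg_mulg1.
    by apply: clos_rt_sym => b c; apply: qadj_sym; exact: cayley_adj_sym.
have K0H : K0 `<=` H.
  move=> k0 /F_covers [u Fu /= Ku] a.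
  rewrite -(tg_mulKVg u k0) tg_mulA qproj_rmul //.
  apply: qconnected_lift; apply: rt_step; exists u; split => //; by left.
have /(_ x) : H (mul (inv x) y) by rewrite (K0_generates H_subgroup K0H).
by rewrite tg_mulKVg.
Qed.

Lemma cayley_adj_locfin x : finite_set [set y | cayley_adj x y].
Proof.
apply: (@sub_finite_set _ _ (mul x @` ([set` F] `|` inv @` [set` F]))).
  move=> y [s [Fs ->]]; exists s => //; case: Fs; [left | right] => //.
  by exists (inv s) => //; rewrite tg_invgK.
by apply: finite_image; rewrite finite_setU; split => //; exact: finite_image.
Qed.

Lemma lmul_transitive x y : exists g, mul g x = y.
Proof. by exists (mul y (inv x)); rewrite -tg_mulA tg_mulVg tg_mulg1. Qed.

(* The stabiliser of a coset x K is K, by normality. *)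
Lemma coset_stab x : [set g | qact g (qproj x) = qproj x] = K.
Proof.
rewrite qstab; apply/seteqP; split=> g /=.
- by case=> k [Kk /tg_mulIg ->].
- by move=> Kg; exists g.
Qed.

Definition coset_graph : CayleyAbels G :=
  @quotient_graph G G cayley_adj mul (@tg_mul1g G) lmul_actM cayley_adj_sym
    cayley_adj_lmul K K_normal (inhabits one) lmul_transitive cayley_adj_locfin
    coset_graph_connected
    (fun x => eq_ind_r open K_open (coset_stab x))
    (fun x => eq_ind_r compact K_compact (coset_stab x)).

End CosetGraph.

Lemma cayley_abels_exists (G : topGroup) (K : set G) :
  compactly_generated G -> is_normal_subgroup K -> compact K -> open K ->
  inhabited (CayleyAbels G).
Proof.
move=> [K0 [cK0 gK0]] HK cK oK.
have [F Fcov] := compact_ltranslate_cover oK (K1 HK) cK0.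
exact: inhabits (coset_graph HK cK oK gK0 Fcov).
Qed.

Lemma md_attained (G : topGroup) : inhabited (CayleyAbels G) ->
  exists (Gam : CayleyAbels G) (d : nat), is_md G d /\ ca_degree Gam d.
Proof.
case=> Gam0; have [n0 deg0] := ca_regular Gam0.
pose P n := `[< exists Gam : CayleyAbels G, ca_degree Gam n >].
have exP : exists n, P n by exists n0; apply/asboolP; exists Gam0.
case: (ex_minnP exP) => d /asboolP [Gam degGam] mind.
exists Gam, d; split=> //; split; first by exists Gam.
by move=> Gam' d' deg'; apply: mind; apply/asboolP; exists Gam'.
Qed.

Theorem corollary2p9 (G : topGroup) :
  tdlc G -> compactly_generated G ->
  (exists K : set G, is_normal_subgroup K /\ compact K /\ open K) ->
  exists (Gam : CayleyAbels G) (d : nat),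
    is_md G d /\ ca_degree Gam d /\ acts_discretely Gam.
Proof.
move=> _ cgG [K [HK [cK oK]]].
have [Gam [d [md degGam]]] := md_attained (cayley_abels_exists cgG HK cK oK).
pose Q := ca_quotient Gam HK cK.
have [d' degQ] := ca_regular Q.
have dd' : d = d'.
  apply/eqP; rewrite eqn_leq (ca_quotient_degree_le degGam degQ) andbT.
  exact: md.2 Q d' degQ.
exists Q, d; split=> //; split; first by rewrite dd'.
exact: ca_quotient_discrete.
Qed.
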